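(* Let $G=(X,b,m,c)$ be a weighted graph with $c=0$, let $p\in(1,\infty)$, let $W\subseteq X$ be finite and $\psi,\theta\colon X\to\mathbb{R}$. Let $u$ be a solution to the obstacle problem in $K_{\psi,\theta}(W)$. If $v\in F^p(\overline W)$ (respectively $v\in D^p(\overline W)$) satisfies $\Delta_pv\ge0$ on $W$ and $u\wedge v\in K_{\psi,\theta}(W)$, then $v\ge u$ on $W$.
   Context: Weighted graph $G=(X,b,m,c)$: $X$ countably infinite; $b$ symmetric, nonnegative, zero on the diagonal, $\sum_yb(x,y)<\infty$; $m>0$; $c\ge0$; $x\sim y$ iff $b(x,y)>0$; $X$ connected. $\partial_eW=\{y\in X\setminus W:y\sim z\text{ for some }z\in W\}$, $\overline W=W\cup\partial_eW$. $a^{\langle p-1\rangle}=|a|^{p-2}a$. $F^p(U)=\{f\colon X\to\mathbb{R}:\sum_yb(x,y)|f(x)-f(y)|^{p-1}<\infty\ \forall x\in U\}$; $\Delta_pf(x)=\frac1{m(x)}\sum_{y\in X}b(x,y)(f(x)-f(y))^{\langle p-1\rangle}$. $\mathcal{E}_{p,U}(u,w)=\frac12\sum_{x,y\in U}b(x,y)(u(x)-u(y))^{\langle p-1\rangle}(w(x)-w(y))$. $D^p(\overline W)=\{v:\sum_{x,y\in\overline W}b(x,y)|v(x)-v(y)|^p<\infty\}$. $K_{\psi,\theta}(W)=\{v\in D^p(\overline W):v\ge\psi\text{ on }W,\ v=\theta\text{ on }\partial_eW\}$. A solution to the obstacle problem in $K_{\psi,\theta}(W)$ is $u\in K_{\psi,\theta}(W)$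 with $\mathcal{E}_{p,\overline W}(u,v-u)\ge0$ for all $v\in K_{\psi,\theta}(W)$. $u\wedge v$ is the pointwise minimum. *)

From HB Require Import structures.
From mathcomp Require Import all_boot all_order all_algebra.
From mathcomp Require Import all_classical all_reals all_analysis.
Set Implicit Arguments. Unset Strict Implicit. Unset Printing Implicit Defensive.
Import Order.TTheory GRing.Theory Num.Theory.
Import numFieldNormedType.Exports.
Local Open Scope classical_set_scope.
Local Open Scope ring_scope.

Section Defs.
Context {R : realType} {X : choiceType}.

(* Signed sum of a real family over a set: (sum of positive parts) minus
   (sum of negative parts); it is the usual sum whenever the family is
   absolutely summable, which is the case everywhere it is used. *)
Definition rsum {T : choiceType} (D : set T) (f : T -> R) : R :=
  fine (\esum_(x in D) (Num.max (f x) 0)%:E)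
  - fine (\esum_(x in D) (Num.max (- f x) 0)%:E).

Definition connected_graph (b : X -> X -> R) : Prop :=
  forall x y : X, exists (n : nat) (s : nat -> X),
    s 0%N = x /\ s n = y /\ (forall i, (i < n)%N -> 0 < b (s i) (s i.+1)).

Definition weighted_graph (b : X -> X -> R) (m c : X -> R) : Prop :=
  countable [set: X] /\ infinite_set [set: X] /\
  (forall x y, b x y = b y x) /\ (forall x y, 0 <= b x y) /\
  (forall x, b x x = 0) /\
  (forall x, (\esum_(y in [set: X]) (b x y)%:E < +oo)%E) /\
  (forall x, 0 < m x) /\ (forall x, 0 <= c x) /\ connected_graph b.

Definition ext_boundary (b : X -> X -> R) (W : set X) : set X :=
  [set y | ~ W y /\ exists z, W z /\ 0 < b y z].

Definition closureW (b : X -> X -> R) (W : set X) : set X :=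
  W `|` ext_boundary b W.

Definition spow (p a : R) : R := (`|a| `^ (p - 2)) * a.

Definition Fp (b : X -> X -> R) (p : R) (U : set X) (f : X -> R) : Prop :=
  forall x, U x ->
    (\esum_(y in [set: X]) (b x y * `|f x - f y| `^ (p - 1))%:E < +oo)%E.

Definition Delta_p (b : X -> X -> R) (m : X -> R) (p : R) (f : X -> R)
  (x : X) : R :=
  (m x)^-1 * rsum [set: X] (fun y => b x y * spow p (f x - f y)).

Definition energy (b : X -> X -> R) (p : R) (U : set X) (u w : X -> R) : R :=
  2^-1 * rsum (U `*` U)
    (fun z : X * X => b z.1 z.2 * spow p (u z.1 - u z.2) * (w z.1 - w z.2)).

Definition Dp (b : X -> X -> R) (p : R) (U : set X) (v : X -> R) : Prop :=
  (\esum_(z in U `*` U) (b z.1 z.2 * `|v z.1 - v z.2| `^ p)%:E < +oo)%E.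

Definition Kset (b : X -> X -> R) (p : R) (psi theta : X -> R) (W : set X)
  (v : X -> R) : Prop :=
  [/\ Dp b p (closureW b W) v,
      (forall x, W x -> psi x <= v x) &
      (forall x, ext_boundary b W x -> v x = theta x)].

Definition obstacle_solution (b : X -> X -> R) (p : R) (psi theta : X -> R)
  (W : set X) (u : X -> R) : Prop :=
  Kset b p psi theta W u /\
  forall v, Kset b p psi theta W v ->
    0 <= energy b p (closureW b W) u (fun x => v x - u x).

End Defs.

From HB Require Import structures.
From mathcomp Require Import all_boot all_order all_algebra.
From mathcomp Require Import all_classical all_reals all_analysis.
From mathcomp Require Import lra ring.
Import Order.TTheory GRing.Theory Num.Theory.
Set Implicit Arguments.
Unset Strict Implicit.
Local Open Scope classical_set_scope.
Local Open Scope ring_scope.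

(* With f := (u - v)^+, the hypothesis min(u, v) = theta = u on the exterior
   boundary makes f vanish outside W, and min(u, v) = u - f is an admissible
   competitor, so the variational inequality gives E(u, f) <= 0.  The discrete
   Green formula turns E(v, f) into sum_{x in W} f(x) m(x) Delta_p v(x) >= 0.
   Hence E(u, f) - E(v, f) <= 0, although it is a sum of terms
   b(x,y) (spow(u x - u y) - spow(v x - v y)) (f x - f y) which are
   nonnegative since a |-> a^<p-1> is increasing; so all of them vanish.
   Such a term is positive on an edge from a point where v < u to one where
   v >= u, so the set of x in W with v x < u x is closed under edges; by
   connectedness it would reach the nonempty complement of the finite set W. *)

Section signed_sums.
Context {R : realType} {T : choiceType}.
Implicit Types (D : set T) (g h : T -> R).

Definition rsummable D g := (\esum_(x in D) (`|g x|)%:E < +oo)%E.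

Lemma maxr0_ge0 (t : R) : 0 <= Num.max t 0.
Proof. by rewrite le_max lexx orbT. Qed.

Lemma maxr0_subN (t : R) : Num.max t 0 - Num.max (- t) 0 = t.
Proof. by rewrite /Num.max; case: (ltP t 0) => ?; case: (ltP (- t) 0) => ?; lra. Qed.

Lemma minr_subl (a c : R) : Num.min a c - a = - Num.max (a - c) 0.
Proof. by rewrite /Num.min /Num.max; case: ltP => ?; case: ltP => ?; lra. Qed.

Lemma esum_fineE D (a : T -> R) : (forall x, D x -> 0 <= a x) ->
  (\esum_(x in D) (a x)%:E < +oo)%E ->
  \esum_(x in D) (a x)%:E = (fine (\esum_(x in D) (a x)%:E))%:E.
Proof. by move=> a0 lt; rewrite fineK // ge0_fin_numE // esum_ge0. Qed.

Lemma le_esum_lt_pinfty D (a c : T -> R) : (forall x, D x -> 0 <= a x <= c x) ->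
  (\esum_(x in D) (c x)%:E < +oo)%E -> (\esum_(x in D) (a x)%:E < +oo)%E.
Proof.
move=> ac; apply: le_lt_trans; apply: le_esum => x Dx.
by rewrite lee_fin; case/andP: (ac x Dx).
Qed.

Lemma fine_esumD D (a c : T -> R) : (forall x, D x -> 0 <= a x) ->
  (forall x, D x -> 0 <= c x) ->
  (\esum_(x in D) (a x)%:E < +oo)%E -> (\esum_(x in D) (c x)%:E < +oo)%E ->
  fine (\esum_(x in D) (a x + c x)%:E) =
  fine (\esum_(x in D) (a x)%:E) + fine (\esum_(x in D) (c x)%:E).
Proof.
move=> a0 c0 af cf; under eq_esum do rewrite EFinD.
rewrite esumD; try by move=> x Dx; rewrite lee_fin ?a0 ?c0.
by rewrite (esum_fineE a0 af) (esum_fineE c0 cf) -EFinD.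
Qed.

Lemma esum_mulr D (k : R) (a : T -> R) : 0 <= k -> (forall x, 0 <= a x) ->
  (\esum_(x in D) (a x * k)%:E = (\esum_(x in D) (a x)%:E) * k%:E)%E.
Proof.
rewrite le_eqVlt => /orP[/eqP <-|k0] a0.
  by rewrite mule0 esum1 // => x _; rewrite mulr0.
rewrite muleC /esum -ereal_sup_pZl //; congr ereal_sup.
rewrite image_comp; apply: eq_imagel => A _ /=.
rewrite ge0_mule_fsumr => [|x]; last by rewrite lee_fin.
by apply: eq_fsbigr => x _; rewrite EFinM muleC.
Qed.

Lemma le_esum_subset D D' (a : T -> R) : D' `<=` D ->
  (forall x, D x -> 0 <= a x) ->
  (\esum_(x in D') (a x)%:E <= \esum_(x in D) (a x)%:E)%E.
Proof.
move=> sub a0; rewrite [leRHS]esum_mkcond [leLHS]esum_mkcond.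
apply: le_esum => x _; case: ifPn => xD'.
  by rewrite ifT // inE; apply: sub; rewrite -inE.
by case: ifPn => // xD; rewrite lee_fin a0 // -inE.
Qed.

Lemma esum_supp D D' (a : T -> R) : D' `<=` D ->
  (forall x, D x -> ~ D' x -> a x = 0) ->
  (\esum_(x in D) (a x)%:E = \esum_(x in D') (a x)%:E)%E.
Proof.
move=> sub a0; rewrite esum_mkcond [RHS]esum_mkcond.
apply: eq_esum => x _; case: ifPn => xD; case: ifPn => xD' //.
- by rewrite a0 //; [exact: set_mem | move/mem_set; exact/negP].
- by move/negP: xD; case; apply/mem_set/sub/set_mem.
Qed.

Lemma rsummable_le D g (c : T -> R) : (forall x, D x -> `|g x| <= c x) ->
  (\esum_(x in D) (c x)%:E < +oo)%E -> rsummable D g.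
Proof. by move=> gc; apply: le_esum_lt_pinfty => x Dx; rewrite normr_ge0 gc. Qed.

Lemma eq_rsummable D g h : (forall x, D x -> g x = h x) ->
  rsummable D g -> rsummable D h.
Proof. by move=> gh; apply: rsummable_le => x Dx; rewrite gh. Qed.

Lemma rsummable_subset D D' g : D' `<=` D -> rsummable D g -> rsummable D' g.
Proof. by move=> sub; apply: le_lt_trans; exact: le_esum_subset. Qed.

Lemma rsummableD D g h : rsummable D g -> rsummable D h ->
  rsummable D (fun x => g x + h x).
Proof.
move=> sg sh; apply: (@rsummable_le _ _ (fun x => `|g x| + `|h x|)).
  by move=> x _; exact: ler_normD.
under eq_esum do rewrite EFinD.
by rewrite esumD ?lte_add_pinfty // => x _; rewrite lee_fin.
Qed.

Lemma rsummableN D g : rsummable D g -> rsummable D (fun x => - g x).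
Proof. by apply: rsummable_le => x Dx; rewrite normrN. Qed.

Lemma rsummableB D g h : rsummable D g -> rsummable D h ->
  rsummable D (fun x => g x - h x).
Proof. by move=> sg /rsummableN; exact: rsummableD. Qed.

Lemma rsummableZr D g (k : R) : 0 <= k -> rsummable D g ->
  rsummable D (fun x => g x * k).
Proof.
move=> k0 sg; apply: (@rsummable_le _ _ (fun x => `|g x| * k)).
  by move=> x _; rewrite normrM (ger0_norm k0).
by rewrite esum_mulr // (esum_fineE _ sg) // -EFinM ltry.
Qed.

Lemma esum_pos_lt_pinfty D g : rsummable D g ->
  (\esum_(x in D) (Num.max (g x) 0)%:E < +oo)%E.
Proof.
by apply: le_esum_lt_pinfty => x _; rewrite maxr0_ge0 ge_max normr_ge0 ler_norm.
Qed.

Lemma esum_neg_lt_pinfty D g : rsummable D g ->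
  (\esum_(x in D) (Num.max (- g x) 0)%:E < +oo)%E.
Proof. by move/rsummableN; exact: esum_pos_lt_pinfty. Qed.

Lemma eq_rsum D g h : (forall x, D x -> g x = h x) -> rsum D g = rsum D h.
Proof.
by move=> gh; rewrite /rsum; congr (fine _ - fine _); apply: eq_esum => x Dx;
  rewrite gh.
Qed.

Lemma rsum_split D g (P N : T -> R) : (forall x, D x -> 0 <= P x) ->
  (forall x, D x -> 0 <= N x) -> (forall x, D x -> g x = P x - N x) ->
  (\esum_(x in D) (P x)%:E < +oo)%E -> (\esum_(x in D) (N x)%:E < +oo)%E ->
  rsum D g = fine (\esum_(x in D) (P x)%:E) - fine (\esum_(x in D) (N x)%:E).
Proof.
move=> P0 N0 gE Pfin Nfin.
have gpos x : D x -> 0 <= Num.max (g x) 0 <= P x.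
  by move=> Dx; rewrite maxr0_ge0 ge_max gE // P0 // gerBl N0.
have gneg x : D x -> 0 <= Num.max (- g x) 0 <= N x.
  by move=> Dx; rewrite maxr0_ge0 ge_max gE // opprB N0 // gerBl P0.
have pos0 x : D x -> 0 <= Num.max (g x) 0 by move=> _; exact: maxr0_ge0.
have neg0 x : D x -> 0 <= Num.max (- g x) 0 by move=> _; exact: maxr0_ge0.
have posfin := le_esum_lt_pinfty gpos Pfin.
have negfin := le_esum_lt_pinfty gneg Nfin.
have : fine (\esum_(x in D) (Num.max (g x) 0 + N x)%:E) =
       fine (\esum_(x in D) (Num.max (- g x) 0 + P x)%:E).
  congr fine; apply: eq_esum => x Dx; congr EFin.
  by have := maxr0_subN (g x); rewrite gE //; lra.
by rewrite !fine_esumD // /rsum; lra.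
Qed.

Lemma rsumD D g h : rsummable D g -> rsummable D h ->
  rsum D (fun x => g x + h x) = rsum D g + rsum D h.
Proof.
move=> sg sh.
have pos0 (k : T -> R) x : D x -> 0 <= Num.max (k x) 0 by move=> _; exact: maxr0_ge0.
have neg0 (k : T -> R) x : D x -> 0 <= Num.max (- k x) 0 by move=> _; exact: maxr0_ge0.
rewrite (@rsum_split D _ (fun x => Num.max (g x) 0 + Num.max (h x) 0)
   (fun x => Num.max (- g x) 0 + Num.max (- h x) 0)).
- rewrite (fine_esumD (pos0 g) (pos0 h)) ?esum_pos_lt_pinfty //.
  rewrite (fine_esumD (neg0 g) (neg0 h)) ?esum_neg_lt_pinfty //.
  rewrite /rsum; lra.
- by move=> x _; rewrite addr_ge0 ?maxr0_ge0.
- by move=> x _; rewrite addr_ge0 ?maxr0_ge0.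
- by move=> x _; have := maxr0_subN (g x); have := maxr0_subN (h x); lra.
- under eq_esum do rewrite EFinD.
  by rewrite esumD ?lte_add_pinfty ?esum_pos_lt_pinfty // => x _;
    rewrite lee_fin maxr0_ge0.
- under eq_esum do rewrite EFinD.
  by rewrite esumD ?lte_add_pinfty ?esum_neg_lt_pinfty // => x _;
    rewrite lee_fin maxr0_ge0.
Qed.

Lemma rsumN D g : rsum D (fun x => - g x) = - rsum D g.
Proof. by rewrite /rsum; under [X in _ - fine X = _]eq_esum do rewrite opprK; lra. Qed.

Lemma rsumB D g h : rsummable D g -> rsummable D h ->
  rsum D (fun x => g x - h x) = rsum D g - rsum D h.
Proof. by move=> sg sh; rewrite rsumD ?rsumN //; exact: rsummableN. Qed.

Lemma rsumZr D g (k : R) : 0 <= k -> rsummable D g ->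
  rsum D (fun x => g x * k) = rsum D g * k.
Proof.
move=> k0 sg.
have fineZr (a : T -> R) : (forall x, 0 <= a x) ->
    (\esum_(x in D) (a x)%:E < +oo)%E ->
    (\esum_(x in D) (a x * k)%:E < +oo)%E /\
    fine (\esum_(x in D) (a x * k)%:E) = fine (\esum_(x in D) (a x)%:E) * k.
  by move=> a0 af; rewrite esum_mulr // (esum_fineE _ af) // -EFinM ltry.
have [posZfin posZ] := fineZr _ (fun x => maxr0_ge0 (g x)) (esum_pos_lt_pinfty sg).
have [negZfin negZ] := fineZr _ (fun x => maxr0_ge0 (- g x)) (esum_neg_lt_pinfty sg).
rewrite (@rsum_split D _ (fun x => Num.max (g x) 0 * k)
   (fun x => Num.max (- g x) 0 * k)) //.
- by rewrite posZ negZ /rsum mulrBl.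
- by move=> x _; rewrite mulr_ge0 ?maxr0_ge0.
- by move=> x _; rewrite mulr_ge0 ?maxr0_ge0.
- by move=> x _; rewrite -mulrBl maxr0_subN.
Qed.

Lemma ge0_rsumE D g : (forall x, D x -> 0 <= g x) ->
  rsum D g = fine (\esum_(x in D) (g x)%:E).
Proof.
move=> g0; rewrite /rsum [X in _ - fine X]esum1 ?subr0; last first.
  by move=> x Dx; congr EFin; apply/max_idPr; rewrite oppr_le0 g0.
by congr fine; apply: eq_esum => x Dx; congr EFin; apply/max_idPl; exact: g0.
Qed.

Lemma rsum_le0_eq0 D g : rsummable D g -> (forall x, D x -> 0 <= g x) ->
  rsum D g <= 0 -> forall x, D x -> g x = 0.
Proof.
move=> sg g0; rewrite ge0_rsumE // => le0 x Dx.
have gfin : (\esum_(x in D) (g x)%:E < +oo)%E.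
  by apply: le_esum_lt_pinfty sg => y Dy; rewrite g0 //= ler_norm.
have : ((g x)%:E <= \esum_(x in D) (g x)%:E)%E.
  apply: esum_ge; exists [set x]; last by rewrite fsbig_set1.
  by split; [exact: finite_set1 | move=> y ->].
rewrite (esum_fineE g0 gfin) lee_fin => gle.
by apply/eqP; rewrite eq_le g0 // andbT (le_trans gle).
Qed.

Lemma rsum_supp D D' g : D' `<=` D -> (forall x, D x -> ~ D' x -> g x = 0) ->
  rsum D g = rsum D' g.
Proof.
move=> sub g0; rewrite /rsum (esum_supp sub) => [|x Dx D'x]; last first.
  by rewrite g0 // maxxx.
by rewrite (esum_supp sub) // => x Dx D'x; rewrite g0 // oppr0 maxxx.
Qed.

End signed_sums.

Section double_sums.
Context {R : realType} {X : choiceType}.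
Implicit Types (A B U : set X).

Definition sw (z : X * X) : X * X := (z.2, z.1).

Lemma esum_swap U (a : X * X -> \bar R) :
  (\esum_(z in U `*` U) a (sw z) = \esum_(z in U `*` U) a z)%E.
Proof.
rewrite -(@esum_image R _ _ (U `*` U) sw a); last first.
  by move=> [x y] [x' y'] _ _ [-> ->].
congr esum; apply/seteqP; split; first by move=> z [[x y] [/= Ux Uy] <-].
by move=> [x y] [/= Ux Uy]; exists (y, x).
Qed.

Lemma rsum_swap U (g : X * X -> R) :
  rsum (U `*` U) (fun z => g (sw z)) = rsum (U `*` U) g.
Proof.
rewrite /rsum (esum_swap U (fun z => (Num.max (g z) 0)%:E)).
by rewrite (esum_swap U (fun z => (Num.max (- g z) 0)%:E)).
Qed.

Lemma rsummable_swap U (g : X * X -> R) :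
  rsummable (U `*` U) g -> rsummable (U `*` U) (fun z => g (sw z)).
Proof. by rewrite /rsummable (esum_swap U (fun z => (`|g z|)%:E)). Qed.

Lemma esum_setXE A B (a : X * X -> R) : (forall z, 0 <= a z) ->
  (\esum_(z in A `*` B) (a z)%:E =
   \esum_(x in A) \esum_(y in B) (a (x, y))%:E)%E.
Proof.
move=> a0; rewrite esum_esum => [|x y _ _]; last by rewrite lee_fin.
by apply: eq_esum => -[x y].
Qed.

Lemma esum_setX_fin A B (a : X * X -> R) : finite_set A -> (forall z, 0 <= a z) ->
  (\esum_(z in A `*` B) (a z)%:E =
    \sum_(x \in A) \esum_(y in B) (a (x, y))%:E)%E.
Proof.
move=> fA a0; rewrite esum_setXE // esum_fset // => x _.
by apply: esum_ge0 => y _; rewrite lee_fin.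
Qed.

Lemma le_esum_row A B (a : X * X -> R) x : A x -> (forall z, 0 <= a z) ->
  (\esum_(y in B) (a (x, y))%:E <= \esum_(z in A `*` B) (a z)%:E)%E.
Proof.
move=> Ax a0; rewrite esum_setXE //; apply: esum_ge; exists [set x].
  by split; [exact: finite_set1 | move=> y ->].
by rewrite fsbig_set1.
Qed.

Lemma rsummable_fin_supp A U (K : X * X -> R) (f : X -> R) :
  finite_set A -> A `<=` U -> (forall x, 0 <= f x) ->
  (forall x, U x -> ~ A x -> f x = 0) ->
  (forall x, A x -> rsummable U (fun y => K (x, y))) ->
  rsummable (U `*` U) (fun z => K z * f z.1).
Proof.
move=> fA AU f0 fA0 Krow; rewrite /rsummable (@esum_supp _ _ _ (A `*` U)).
- rewrite esum_setX_fin //= fsbig_finite //= big_seq.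
  apply: lte_sum_pinfty => x; rewrite in_fset_set // inE => Ax.
  under eq_esum do rewrite normrM (ger0_norm (f0 x)).
  by rewrite esum_mulr // (esum_fineE _ (Krow x Ax)) // -EFinM ltry.
- by move=> [x y] [/= Ax Uy]; split => //; exact: AU.
- move=> [x y] [/= Ux Uy] nA; rewrite fA0 ?mulr0 ?normr0 //.
  by move=> Ax; apply: nA.
Qed.

Lemma rsum_setX_ge0 A B (g : X * X -> R) : finite_set A ->
  rsummable (A `*` B) g ->
  (forall x, A x -> rsummable B (fun y => g (x, y))) ->
  (forall x, A x -> 0 <= rsum B (fun y => g (x, y))) ->
  0 <= rsum (A `*` B) g.
Proof.
move=> fA sg srow rrow; rewrite /rsum subr_ge0.
have fin (a : X * X -> R) : (forall z, 0 <= a z) ->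
    (\esum_(z in A `*` B) (a z)%:E < +oo)%E ->
    \esum_(z in A `*` B) (a z)%:E \is a fin_num.
  by move=> a0 af; rewrite ge0_fin_numE // esum_ge0 // => z _; rewrite lee_fin.
apply: fine_le.
- exact: fin (fun z => maxr0_ge0 (- g z)) (esum_neg_lt_pinfty sg).
- exact: fin (fun z => maxr0_ge0 (g z)) (esum_pos_lt_pinfty sg).
rewrite !esum_setX_fin //; try by move=> z; exact: maxr0_ge0.
apply: lee_fsum => // x Ax; have := rrow x Ax; rewrite /rsum subr_ge0.
rewrite (esum_fineE _ (esum_pos_lt_pinfty (srow x Ax))) => [|y _]; last first.
  exact: maxr0_ge0.
rewrite (esum_fineE _ (esum_neg_lt_pinfty (srow x Ax))) => [|y _]; last first.
  exact: maxr0_ge0.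
by rewrite lee_fin.
Qed.

Lemma antisym_diffE (K : X * X -> R) (f : X -> R) z :
  (forall z, K (sw z) = - K z) ->
  K z * (f z.1 - f z.2) = K z * f z.1 + K (sw z) * f (sw z).1.
Proof. by move=> Ksw; rewrite Ksw /=; ring. Qed.

Lemma rsummable_antisym_diff U (K : X * X -> R) (f : X -> R) :
  (forall z, K (sw z) = - K z) -> rsummable (U `*` U) (fun z => K z * f z.1) ->
  rsummable (U `*` U) (fun z => K z * (f z.1 - f z.2)).
Proof.
move=> Ksw sK; have sKsw := rsummable_swap sK.
apply: (eq_rsummable (fun z _ => esym (antisym_diffE f z Ksw))).
exact: rsummableD sK sKsw.
Qed.

Lemma rsum_antisym_diff U (K : X * X -> R) (f : X -> R) :
  (forall z, K (sw z) = - K z) -> rsummable (U `*` U) (fun z => K z * f z.1) ->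
  rsum (U `*` U) (fun z => K z * (f z.1 - f z.2)) =
  2 * rsum (U `*` U) (fun z => K z * f z.1).
Proof.
move=> Ksw sK; rewrite (eq_rsum (fun z _ => antisym_diffE f z Ksw)).
rewrite rsumD ?(rsummable_swap sK) //.
by rewrite (rsum_swap U (fun z => K z * f z.1)) mulr2n mulrDl mul1r.
Qed.

End double_sums.

Lemma powR_subr1_le1D (R : realType) (p t : R) : 1 <= p -> 0 <= t ->
  t `^ (p - 1) <= 1 + t `^ p.
Proof.
move=> p1 t0; have [t1|t1] := leP t 1.
  have : t `^ (p - 1) <= 1 `^ (p - 1).
    by apply: ge0_ler_powR; rewrite ?nnegrE ?subr_ge0.
  by rewrite powR1 => tp; have := powR_ge0 t p; lra.
have : t `^ (p - 1) <= t `^ p by apply: ler_powR; [exact: ltW | lra].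
lra.
Qed.

Section signed_power.
Context {R : realType}.
Variable p : R.
Hypothesis p_gt1 : 1 < p.

Lemma spowN (a : R) : spow p (- a) = - spow p a.
Proof. by rewrite /spow normrN mulrN. Qed.

Lemma ge0_spowE (a : R) : 0 <= a -> spow p a = a `^ (p - 1).
Proof.
move=> a0; rewrite /spow ger0_norm //.
have e : p - 2 + 1 = p - 1 by lra.
have p1_neq0 : (p - 1 == 0) = false by rewrite subr_eq0 gt_eqF.
by rewrite -{2}(powRr1 a0) -powRD e // p1_neq0.
Qed.

Lemma norm_spow (a : R) : `|spow p a| = `|a| `^ (p - 1).
Proof.
have := ge0_spowE (normr_ge0 a); rewrite /spow normr_id => <-.
by rewrite normrM ger0_norm ?powR_ge0.
Qed.

Lemma spow_gt0 (a : R) : 0 < a -> 0 < spow p a.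
Proof. by move=> a0; rewrite ge0_spowE ?ltW // powR_gt0. Qed.

Lemma spow_homo_lt : {homo spow p : a c / a < c}.
Proof.
have nneg (a c : R) : 0 <= a -> a < c -> spow p a < spow p c.
  move=> a0 ac; rewrite !ge0_spowE // ?(le_trans a0 (ltW ac)) //.
  apply: gt0_ltr_powR => //; first by rewrite subr_gt0.
  by rewrite nnegrE; apply: le_trans a0 (ltW ac).
move=> a c ac; have [a0|a0] := leP 0 a; first exact: nneg.
have [c0|c0] := leP 0 c.
  have : 0 < spow p (- a) by rewrite spow_gt0 // oppr_gt0.
  have : 0 <= spow p c by rewrite ge0_spowE // powR_ge0.
  rewrite spowN; lra.
have := nneg (- c) (- a); rewrite !spowN !ltrN2 oppr_ge0.
by apply => //; exact: ltW.
Qed.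

Lemma ler_spow : {mono spow p : a c / a <= c}.
Proof. exact: le_mono spow_homo_lt. Qed.

Lemma ltr_spow : {mono spow p : a c / a < c}.
Proof. exact: leW_mono ler_spow. Qed.

(* Both factors have the sign of
   [(a1 - a2) - (c1 - c2) = (a1 - c1) - (a2 - c2)]. *)
Lemma spow_gap_mul_max_ge0 (a1 a2 c1 c2 : R) :
  0 <= (spow p (a1 - a2) - spow p (c1 - c2)) *
       (Num.max (a1 - c1) 0 - Num.max (a2 - c2) 0).
Proof.
have [ca|ac] := leP (c1 - c2) (a1 - a2).
  apply: mulr_ge0; first by rewrite subr_ge0 ler_spow.
  by rewrite /Num.max; case: ltP => ?; case: ltP => ?; lra.
apply: mulr_le0; first by rewrite subr_le0 ltW // ltr_spow.
by rewrite /Num.max; case: ltP => ?; case: ltP => ?; lra.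
Qed.

Lemma spow_gap_mul_max_gt0 (a1 a2 c1 c2 : R) : c1 < a1 -> a2 <= c2 ->
  0 < (spow p (a1 - a2) - spow p (c1 - c2)) *
      (Num.max (a1 - c1) 0 - Num.max (a2 - c2) 0).
Proof.
move=> ca1 ac2; have : spow p (c1 - c2) < spow p (a1 - a2) by rewrite ltr_spow; lra.
rewrite (max_idPl _) ?subr_ge0 ?ltW // (max_idPr _) ?subr_le0 // => gap.
by apply: mulr_gt0; lra.
Qed.

End signed_power.

Lemma connected_graph_closed (R : realType) (X : choiceType) (b : X -> X -> R)
  (P : X -> Prop) x : connected_graph b ->
  (forall x y, P x -> 0 < b x y -> P y) -> P x -> forall y, P y.
Proof.
move=> conn closed Px y; have [n [s [s0 [sn sb]]]] := conn x y.
suff Ps i : (i <= n)%N -> P (s i) by rewrite -sn; exact: Ps.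
elim: i => [|i IH] lein; first by rewrite s0.
exact: closed (IH (ltnW lein)) (sb i lein).
Qed.

Section p_Laplacian.
Context {R : realType} {X : choiceType}.
Variables (b : X -> X -> R) (p : R).
Hypotheses (b_ge0 : forall x y, 0 <= b x y) (b_sym : forall x y, b x y = b y x).
Hypothesis p_gt1 : 1 < p.

Definition flux (h : X -> R) (z : X * X) : R :=
  b z.1 z.2 * spow p (h z.1 - h z.2).

Lemma flux_sw h z : flux h (sw z) = - flux h z.
Proof. by rewrite /flux /sw /= b_sym -opprB spowN mulrN. Qed.

Lemma norm_flux h x y : `|flux h (x, y)| = b x y * `|h x - h y| `^ (p - 1).
Proof. by rewrite normrM ger0_norm // norm_spow. Qed.

Lemma closureW_adj W x y : W x -> 0 < b x y -> closureW b W y.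
Proof.
move=> Wx bxy; have [Wy|nWy] := pselect (W y); [by left | right].
by split => //; exists x; rewrite b_sym.
Qed.

Lemma b_eq0_out_closureW W x y : W x -> ~ closureW b W y -> b x y = 0.
Proof.
move=> Wx nUy; apply/eqP; rewrite eq_le b_ge0 andbT leNgt.
by apply/negP => /(closureW_adj Wx).
Qed.

Lemma Fp_rsummable_flux (U V : set X) h x : Fp b p U h -> U x ->
  rsummable V (fun y => flux h (x, y)).
Proof.
move=> Fh Ux; rewrite /rsummable; under eq_esum do rewrite norm_flux.
apply: le_lt_trans (Fh x Ux); apply: le_esum_subset => // y _.
by rewrite mulr_ge0 ?powR_ge0.
Qed.

(* [t^(p-1) <= 1 + t^p] bounds a row of [|grad h|^(p-1)] by the row sum of [b]
   plus a row of the [p]-energy. *)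
Lemma Dp_rsummable_flux (U : set X) h x :
  (forall x, (\esum_(y in [set: X]) (b x y)%:E < +oo)%E) -> Dp b p U h -> U x ->
  rsummable U (fun y => flux h (x, y)).
Proof.
move=> b_fin Dh Ux; rewrite /rsummable; under eq_esum do rewrite norm_flux.
apply: (@le_esum_lt_pinfty _ _ _ _ (fun y => b x y + b x y * `|h x - h y| `^ p)).
  move=> y _; rewrite mulr_ge0 ?powR_ge0 //=.
  have := powR_subr1_le1D (ltW p_gt1) (normr_ge0 (h x - h y)).
  by have := b_ge0 x y; nra.
under eq_esum do rewrite EFinD.
rewrite esumD => [|y _|y _]; rewrite ?lee_fin ?mulr_ge0 ?powR_ge0 //.
apply: lte_add_pinfty.
  by apply: le_lt_trans (b_fin x); exact: le_esum_subset.
apply: le_lt_trans Dh.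
have := @le_esum_row _ _ U U (fun z => b z.1 z.2 * `|h z.1 - h z.2| `^ p) x Ux.
by apply => z; rewrite mulr_ge0 ?powR_ge0.
Qed.

Section comparison.
Variables (W : set X) (u v : X -> R).
Hypothesis W_fin : finite_set W.
Hypothesis uv_ext : forall x, ext_boundary b W x -> u x <= v x.
Local Notation U := (closureW b W).
Hypothesis u_row : forall x, W x -> rsummable U (fun y => flux u (x, y)).
Hypothesis v_row : forall x, W x -> rsummable U (fun y => flux v (x, y)).

Definition excess x := Num.max (u x - v x) 0.

Lemma excess_ge0 x : 0 <= excess x.
Proof. exact: maxr0_ge0. Qed.

Lemma excess_out x : U x -> ~ W x -> excess x = 0.
Proof.
case=> [//|xb] _; apply/max_idPr; rewrite subr_le0; exact: uv_ext.
Qed.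

Lemma rsummable_flux_excess h :
  (forall x, W x -> rsummable U (fun y => flux h (x, y))) ->
  rsummable (U `*` U) (fun z => flux h z * excess z.1).
Proof.
move=> h_row; apply: rsummable_fin_supp h_row => //.
- by move=> x; left.
- exact: excess_ge0.
- exact: excess_out.
Qed.

Lemma energy_min_excess :
  energy b p U u (fun x => Num.min (u x) (v x) - u x) =
  - rsum (U `*` U) (fun z => flux u z * excess z.1).
Proof.
rewrite /energy (@eq_rsum _ _ _ _
  (fun z => - (flux u z * (excess z.1 - excess z.2)))) => [|z _]; last first.
  by rewrite /flux /excess !minr_subl; ring.
rewrite rsumN rsum_antisym_diff ?rsummable_flux_excess //; last exact: flux_sw.
by rewrite mulrN mulrA mulVf ?mul1r.
Qed.

Lemma green_excess_ge0 (m : X -> R) : (forall x, 0 < m x) ->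
  (forall x, W x -> 0 <= Delta_p b m p v x) ->
  0 <= rsum (U `*` U) (fun z => flux v z * excess z.1).
Proof.
move=> m_gt0 Dv.
have WU : W `*` U `<=` U `*` U by move=> [x y] [/= Wx Uy]; split => //; left.
rewrite (rsum_supp WU) => [|[x y] [/= Ux Uy] nW]; last first.
  by rewrite excess_out ?mulr0 // => Wx; apply: nW.
apply: rsum_setX_ge0 => //.
- exact: rsummable_subset WU (rsummable_flux_excess v_row).
- by move=> x Wx; apply: rsummableZr (excess_ge0 x) (v_row Wx).
move=> x Wx /=; rewrite rsumZr ?excess_ge0 ?v_row //.
apply: mulr_ge0 (excess_ge0 x).
rewrite -(@rsum_supp _ _ [set: X] U) // => [|y _ nUy]; last first.
  by rewrite /flux /= (b_eq0_out_closureW Wx nUy) mul0r.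
by have := Dv x Wx; rewrite /Delta_p pmulr_rge0 ?invr_gt0.
Qed.

Lemma flux_gapE z : (flux u z - flux v z) * (excess z.1 - excess z.2) =
  b z.1 z.2 * ((spow p (u z.1 - u z.2) - spow p (v z.1 - v z.2)) *
               (Num.max (u z.1 - v z.1) 0 - Num.max (u z.2 - v z.2) 0)).
Proof. by rewrite /flux /excess; ring. Qed.

Lemma flux_gap_eq0 :
  rsum (U `*` U) (fun z => flux u z * excess z.1) <= 0 ->
  0 <= rsum (U `*` U) (fun z => flux v z * excess z.1) ->
  forall z, (U `*` U) z -> (flux u z - flux v z) * (excess z.1 - excess z.2) = 0.
Proof.
move=> Eu Ev; pose K z := flux u z - flux v z.
have Ksw z : K (sw z) = - K z by rewrite /K !flux_sw; ring.
have KE : forall z, (U `*` U) z ->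
    K z * excess z.1 = flux u z * excess z.1 - flux v z * excess z.1.
  by move=> z _; rewrite /K mulrBl.
have sK : rsummable (U `*` U) (fun z => K z * excess z.1).
  apply: eq_rsummable (fun z Uz => esym (KE z Uz)) _.
  exact: rsummableB (rsummable_flux_excess u_row) (rsummable_flux_excess v_row).
apply: rsum_le0_eq0 (rsummable_antisym_diff Ksw sK) _ _.
  move=> z _; rewrite flux_gapE.
  exact: mulr_ge0 (b_ge0 _ _) (spow_gap_mul_max_ge0 p_gt1 _ _ _ _).
rewrite rsum_antisym_diff // (eq_rsum KE).
by rewrite rsumB ?rsummable_flux_excess //; lra.
Qed.

Lemma excess_edge_closed :
  (forall z, (U `*` U) z -> (flux u z - flux v z) * (excess z.1 - excess z.2) = 0) ->
  forall x y, W x /\ v x < u x -> 0 < b x y -> W y /\ v y < u y.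
Proof.
move=> gap0 x y [Wx vux] bxy; have Uy := closureW_adj Wx bxy.
have [vuy|uvy] := ltP (v y) (u y).
  split => //; apply: contrapT => nWy.
  by have := excess_out Uy nWy; move/max_idPr; rewrite subr_le0; lra.
exfalso; have := gap0 (x, y) (conj (or_introl Wx) Uy).
rewrite flux_gapE /= => /eqP; rewrite gt_eqF //.
exact: mulr_gt0 bxy (spow_gap_mul_max_gt0 p_gt1 vux uvy).
Qed.

Lemma excess_comparison (m : X -> R) : (forall x, 0 < m x) ->
  connected_graph b -> infinite_set [set: X] ->
  rsum (U `*` U) (fun z => flux u z * excess z.1) <= 0 ->
  (forall x, W x -> 0 <= Delta_p b m p v x) ->
  forall x, W x -> u x <= v x.
Proof.
move=> m_gt0 conn X_inf Eu Dv x Wx; rewrite leNgt; apply/negP => vux.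
have [y nWy] : exists y, ~ W y.
  apply/existsNP => allW; apply: X_inf; apply: sub_finite_set W_fin => y _.
  exact: allW.
have gap0 := flux_gap_eq0 Eu (green_excess_ge0 m_gt0 Dv).
have [Wy _] := connected_graph_closed conn (excess_edge_closed gap0) (conj Wx vux) y.
exact: nWy Wy.
Qed.

End comparison.
End p_Laplacian.

Theorem lemma3p26 (R : realType) (X : choiceType) (b : X -> X -> R)
  (m c : X -> R) (p : R) (W : set X) (psi theta u v : X -> R) :
  weighted_graph b m c -> (forall x, c x = 0) -> 1 < p -> finite_set W ->
  obstacle_solution b p psi theta W u ->
  (Fp b p (closureW b W) v \/ Dp b p (closureW b W) v) ->
  (forall x, W x -> 0 <= Delta_p b m p v x) ->
  Kset b p psi theta W (fun x => Num.min (u x) (v x)) ->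
  forall x, W x -> u x <= v x.
Proof.
move=> [_ [X_inf [b_sym [b_ge0 [_ [b_fin [m_gt0 [_ conn]]]]]]]] _ p_gt1 W_fin.
move=> [[Du _ u_ext] u_min] v_reg Dv Kmin.
have uv_ext x : ext_boundary b W x -> u x <= v x.
  have [_ _ min_ext] := Kmin.
  by move=> xb; apply/min_idPl; rewrite min_ext // u_ext.
have WU x : W x -> closureW b W x by left.
have u_row x (Wx : W x) := Dp_rsummable_flux b_ge0 p_gt1 b_fin Du (WU x Wx).
have v_row x : W x -> rsummable (closureW b W) (fun y => flux b p v (x, y)).
  move=> /WU Ux; case: v_reg => [Fv|Dpv].
  - exact: (Fp_rsummable_flux b_ge0 p_gt1 _ Fv Ux).
  - exact: (Dp_rsummable_flux b_ge0 p_gt1 b_fin Dpv Ux).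
have := u_min _ Kmin; rewrite (energy_min_excess b_sym W_fin uv_ext u_row).
rewrite oppr_ge0 => Eu.
exact: (excess_comparison b_ge0 b_sym p_gt1 W_fin uv_ext u_row v_row
  m_gt0 conn X_inf Eu Dv).
Qed.
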